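(* Consider the single-queue bandit described in the context, with problem instance $(\lambda,\boldsymbol{\mu})$, $\boldsymbol\mu=(\mu_1,\dots,\mu_K)$. For every $\alpha\in(0,1)$ and every $\alpha$-consistent scheduling policy, the queue-regret satisfies $$\Psi(t)\ \ge\ \left(\frac{\lambda}{4}\,D(\boldsymbol{\mu})\,(1-\alpha)\,(K-1)\right)\frac{1}{t}$$ for infinitely many $t$, where $$D(\boldsymbol{\mu})=\frac{\Delta}{\mathrm{KL}\left(\mu_{\min},\frac{\mu^*+1}{2}\right)}.$$
   Context: Discrete-time queueing system with one queue and $K\ge 2$ servers indexed by $[K]=\{1,\dots,K\}$. Arrivals $A(t)\in\{0,1\}$ are i.i.d. Bernoulli($\lambda$) over time slots $t=1,2,\dots$; the service $R_k(t)\in\{0,1\}$ offered by server $k$ at time $t$ is Bernoulli($\mu_k$), independent across $k$, across $t$ and of the arrivals. Let $\mu^*=\max_k\mu_k$, attained at a unique server $k^*$, and assume $\lambda<\mu^*$. A scheduling policy chooses at each time $t$ a server $\kappa(t)\in[K]$ based only on past observations (the servers scheduled and the services they provided, and arrivals, up to time $t-1$) and possibly independent internal randomization; the service parameters are unknown to it. With $S(t)=R_{\kappa(t)}(t)$, the queue evolves as $Q(t)=(Q(t-1)+A(t)-S(t))^+$. The genie queue $Q^*(t)$ uses the same arrivals and always schedules $k^*$: $Q^*(t)=(Q^*(t-1)+A(t)-R_{k^*}(t))^+$. Both $Q(0)$ and $Q^*(0)$ are distributed according to the stationary distribution $\pi_{(\lambda,\mu^* )}$ of $Q^*$. The queue-regret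 is $\Psi(t)=\mathbb{E}[Q(t)-Q^*(t)]$. Notation: $\Delta=\mu^*-\max_{k\ne k^*}\mu_k$, $\mu_{\min}=\min_k\mu_k$, and $\mathrm{KL}(p,q)=p\log\frac pq+(1-p)\log\frac{1-p}{1-q}$ is the Bernoulli Kullback–Leibler divergence. A policy is $\alpha$-consistent ($\alpha\in(0,1)$) if for every problem instance $(\lambda,\boldsymbol\mu)$ of this type, $\mathbb{E}\left[\sum_{s=1}^t \mathbf 1\{\kappa(s)=k\}\right]=O(t^\alpha)$ as $t\to\infty$ for every $k\ne k^*$. *)

From HB Require Import structures.
From mathcomp Require Import all_boot all_order all_algebra.
From mathcomp Require Import all_classical all_reals all_analysis.
Set Implicit Arguments. Unset Strict Implicit. Unset Printing Implicit Defensive.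
Import Order.TTheory GRing.Theory Num.Theory.
Import numFieldNormedType.Exports.
Local Open Scope classical_set_scope.
Local Open Scope ring_scope.

Section QueueBandit.
Variable R : realType.
Variable K : nat.

Definition bern (p : R) (b : bool) : R := if b then p else 1 - p.

(* The randomness revealed in one time slot:
   ((arrival A(s), full service vector (R_k(s))_k), scheduled server kappa(s)). *)
Definition step := (bool * {ffun 'I_K -> bool} * 'I_K)%type.

Definition arr (x : step) : bool := x.1.1.
Definition srv (x : step) : {ffun 'I_K -> bool} := x.1.2.
Definition sched (x : step) : 'I_K := x.2.

Definition obs (x : step) : 'I_K * bool * bool := (sched x, srv x (sched x), arr x).

(* A (randomized) scheduling policy: given the observation history of the
   slots 1..t-1 (oldest first), a probability distribution on servers for slot t. *)
Definition policy := seq ('I_K * bool * bool) -> 'I_K -> R.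

Definition valid_policy (pol : policy) : Prop :=
  (forall h k, 0 <= pol h k) /\ (forall h, \sum_(k < K) pol h k = 1).

Definition step_prob (lam : R) (mu : 'I_K -> R) (pol : policy)
    (past : seq step) (x : step) : R :=
  bern lam (arr x) * (\prod_(k < K) bern (mu k) (srv x k))
  * pol (map obs past) (sched x).

Definition traj_prob (lam : R) (mu : 'I_K -> R) (pol : policy) (t : nat)
    (w : t.-tuple step) : R :=
  \prod_(i < t) step_prob lam mu pol (take i w) (tnth w i).

(* queue length after the slots w, starting from q0, served by [serv]:
   Q(s) = (Q(s-1) + A(s) - S(s))^+ (nat subtraction is truncated) *)
Definition qlen (q0 : nat) (serv : step -> bool) (w : seq step) : nat :=
  foldl (fun q x => (q + arr x - serv x)%N) q0 w.

Definition pol_service (x : step) : bool := srv x (sched x).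
Definition genie_service (ks : 'I_K) (x : step) : bool := srv x ks.

Definition genie_kernel (lam mus : R) (m n : nat) : R :=
  \sum_(a : bool) \sum_(r : bool)
     bern lam a * bern mus r * ((m + a - r)%N == n)%:R.

Definition stationary_dist (lam mus : R) (pi : nat -> R) : Prop :=
  (forall n, 0 <= pi n) /\
  (series pi @ \oo --> (1 : R)) /\
  (forall n, series (fun m => pi m * genie_kernel lam mus m n) @ \oo --> pi n).

(* queue-regret Psi(t) = E[Q(t) - Qstar(t)], with Q(0) = Qstar(0) ~ pi,
   independent of arrivals / services / policy randomization *)
Definition queue_regret (lam : R) (mu : 'I_K -> R) (ks : 'I_K) (pol : policy)
    (pi : nat -> R) (t : nat) : R :=
  limn (series (fun q0 : nat => pi q0 *
     \sum_(w : t.-tuple step) traj_prob lam mu pol w *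
        (((qlen q0 pol_service w)%:R : R) - (qlen q0 (genie_service ks) w)%:R))).

Definition expected_pulls (lam : R) (mu : 'I_K -> R) (pol : policy) (k : 'I_K)
    (t : nat) : R :=
  \sum_(w : t.-tuple step) traj_prob lam mu pol w *
     (count (fun x => sched x == k) w)%:R.

Definition instance (lam : R) (mu : 'I_K -> R) (ks : 'I_K) : Prop :=
  0 <= lam <= 1 /\ (forall k, 0 <= mu k <= 1) /\
  (forall k, k != ks -> mu k < mu ks) /\ lam < mu ks.

Definition alpha_consistent (alpha : R) (pol : policy) : Prop :=
  forall lam mu ks, instance lam mu ks ->
  forall k, k != ks ->
  exists C : R, exists T : nat, forall t : nat, (T <= t)%N ->
    expected_pulls lam mu pol k t <= C * (t%:R `^ alpha).

(* Bernoulli KL divergence KL(p,q) (for 0 < q < 1); the convention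
   0 * log 0 = 0 is automatic since 0 * _ = 0. *)
Definition bern_kl (p q : R) : R :=
  p * ln (p / q) + (1 - p) * ln ((1 - p) / (1 - q)).

Definition gap (mu : 'I_K -> R) (ks : 'I_K) : R :=
  mu ks - \big[Num.max/0]_(k < K | k != ks) mu k.

Definition mu_min (mu : 'I_K -> R) : R := \big[Num.min/1]_(k < K) mu k.

(* D(mu) = Delta / KL(mu_min, (mu_star+1)/2); when mu_star = 1 the KL is +infinity
   (as mu_min < 1), so D(mu) = 0. *)
Definition Dmu (mu : 'I_K -> R) (ks : 'I_K) : R :=
  if mu ks < 1 then gap mu ks / bern_kl (mu_min mu) ((mu ks + 1) / 2) else 0.

End QueueBandit.

From HB Require Import structures.
From mathcomp Require Import all_boot all_order all_algebra.
From mathcomp Require Import all_classical all_reals all_analysis.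
From mathcomp Require Import ring lra zify.
Import Order.TTheory GRing.Theory Num.Theory.
Import numFieldNormedType.Exports.
Local Open Scope classical_set_scope.
Local Open Scope ring_scope.
Set Implicit Arguments. Unset Strict Implicit. Unset Printing Implicit Defensive.

(* Let S(t) be the expected number of pulls of suboptimal servers up to time t.
   Coupling: by backward induction over nondecreasing test functions, the genie queue
   is stochastically smaller than the policy's queue at all times, and serving one
   slot with server k instead of k* raises the expected next queue length by at
   least [lam (mu* - mu_k)]; hence [Psi(t+1) >= lam Delta (S(t+1) - S(t))].
   Change of measure (Lai-Robbins): raising the rate of a suboptimal server k to
   [(mu* + 1) / 2] makes it the unique best server; alpha-consistency in both
   instances forces [KL(mu_k, (mu* + 1) / 2) E[N_k(t)] >= (1 - alpha) / 2 ln t - O(1)],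
   and [KL(mu_min, .)] dominates all these divergences.  If [Psi(t) < c / t] for all
   large t with the constant c of the theorem, summing the first bound gives
   [S(t) <= (1 - alpha)(K - 1) / (4 KL) ln t + O(1)], half the second one. *)

Section PathMeasure.
Variables (R : realType) (T : finType).

Lemma big_tuple0 (G : 0.-tuple T -> R) : \sum_(u : 0.-tuple T) G u = G [tuple].
Proof.
rewrite (eq_bigr (fun=> G [tuple])) => [|u _]; last by rewrite tuple0.
by rewrite sumr_const card_tuple expn0.
Qed.

Lemma rcons_tuple_take t (u : t.+1.-tuple T) (hsz : size (take t u) == t) :
  rcons_tuple (Tuple hsz) (tnth u ord_max) = u.
Proof.
apply: val_inj => /=; rewrite (tnth_nth (tnth u ord_max)) /= -take_nth ?size_tuple //.
by rewrite take_oversize // size_tuple.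
Qed.

Lemma tuple_rconsP t (u : t.+1.-tuple T) : exists w x, u = rcons_tuple w x.
Proof.
have hsz : size (take t u) == t by rewrite size_takel // size_tuple.
by exists (Tuple hsz), (tnth u ord_max); rewrite rcons_tuple_take.
Qed.

Lemma big_tuple_rcons t (G : t.+1.-tuple T -> R) :
  \sum_(u : t.+1.-tuple T) G u = \sum_(w : t.-tuple T) \sum_x G (rcons_tuple w x).
Proof.
rewrite pair_bigA /=.
have hsz (u : t.+1.-tuple T) : size (take t u) == t by rewrite size_takel // size_tuple.
rewrite (reindex (fun p : t.-tuple T * T => rcons_tuple p.1 p.2)) //.
exists (fun u => (Tuple (hsz u), tnth u ord_max)) => [[w x] _|u _] /=.
  congr pair; first by apply: val_inj; rewrite /= -cats1 take_size_cat ?size_tuple.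
  by rewrite (tnth_nth x) /= nth_rcons size_tuple ltnn eqxx.
exact: rcons_tuple_take.
Qed.

Variable s : seq T -> T -> R.

Definition path_prob t (w : t.-tuple T) : R := \prod_(i < t) s (take i w) (tnth w i).

Lemma path_prob0 (w : 0.-tuple T) : path_prob w = 1.
Proof. by rewrite /path_prob big_ord0. Qed.

Lemma path_prob_rcons t (w : t.-tuple T) x :
  path_prob (rcons_tuple w x) = path_prob w * s w x.
Proof.
have hw : size w = t by rewrite size_tuple.
rewrite /path_prob big_ord_recr /=; congr (_ * _).
  apply: eq_bigr => i _; rewrite (tnth_nth x) /= nth_rcons hw ltn_ord -(tnth_nth x).
  by rewrite -cats1 takel_cat // hw ltnW.
by rewrite (tnth_nth x) /= nth_rcons hw ltnn eqxx -cats1 -{1}hw take_size_cat.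
Qed.

Lemma sum_path_prob_rcons t (F : seq T -> R) :
  \sum_(u : t.+1.-tuple T) path_prob u * F u =
  \sum_(w : t.-tuple T) path_prob w * \sum_x s w x * F (rcons w x).
Proof.
rewrite big_tuple_rcons; apply: eq_bigr => w _.
by rewrite mulr_sumr; apply: eq_bigr => x _; rewrite path_prob_rcons mulrA.
Qed.

Hypothesis s_ge0 : forall h x, 0 <= s h x.
Hypothesis s_sum1 : forall h, \sum_x s h x = 1.

Lemma path_prob_ge0 t (w : t.-tuple T) : 0 <= path_prob w.
Proof. exact: prodr_ge0. Qed.

Lemma sum_path_prob t : \sum_(w : t.-tuple T) path_prob w = 1.
Proof.
elim: t => [|t IH]; first by rewrite big_tuple0 path_prob0.
under eq_bigr => w _ do rewrite -[path_prob w]mulr1.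
rewrite (sum_path_prob_rcons t (fun=> 1)) -[RHS]IH; apply: eq_bigr => w _.
by rewrite (eq_bigr (s w)) ?s_sum1 ?mulr1 // => x _; rewrite mulr1.
Qed.

Lemma sum_path_prob_additive t (g : T -> R) :
  \sum_(u : t.+1.-tuple T) path_prob u * \sum_(y <- u) g y =
  \sum_(w : t.-tuple T) path_prob w * \sum_(y <- w) g y +
  \sum_(w : t.-tuple T) path_prob w * \sum_y s w y * g y.
Proof.
rewrite (sum_path_prob_rcons t (fun u => \sum_(y <- u) g y)) -big_split /=.
apply: eq_bigr => w _; rewrite -mulrDr; congr (_ * _).
under eq_bigr => y _ do rewrite big_rcons /= mulrDr.
by rewrite big_split /= -mulr_suml s_sum1 mul1r addrC.
Qed.

Lemma sum_path_prob_additive_scale t (f g : T -> R) (c : R) :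
  (forall h, \sum_y s h y * g y = c * \sum_y s h y * f y) ->
  \sum_(w : t.-tuple T) path_prob w * \sum_(y <- w) g y =
  c * \sum_(w : t.-tuple T) path_prob w * \sum_(y <- w) f y.
Proof.
move=> hgf; elim: t => [|t IH]; first by rewrite !big_tuple0 !big_nil !mulr0.
rewrite !sum_path_prob_additive IH mulrDr; congr (_ + _).
by rewrite mulr_sumr; apply: eq_bigr => w _; rewrite hgf mulrCA.
Qed.

End PathMeasure.

Section PathLikelihoodRatio.
Variables (R : realType) (T : finType).

Lemma path_prob_change_measure (s s' : seq T -> T -> R) (ell : T -> R) :
  (forall h x, 0 <= s h x) -> (forall h y, s h y * expR (- ell y) <= s' h y) ->
  forall t (w : t.-tuple T),
  path_prob s w * expR (- \sum_(y <- w) ell y) <= path_prob s' w.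
Proof.
move=> s_ge0 hs' t; elim: t => [|t IH] w.
  by rewrite !path_prob0 tuple0 big_nil oppr0 expR0 mulr1.
have [v [x ->]] := tuple_rconsP w.
rewrite !path_prob_rcons big_rcons /= opprD expRD mulrACA.
apply: ler_pM; [exact: mulr_ge0 (path_prob_ge0 s_ge0 _) (expR_ge0 _)|
  exact: mulr_ge0 (s_ge0 _ _) (expR_ge0 _)| exact: IH | exact: hs'].
Qed.

End PathLikelihoodRatio.

Section FiniteWeights.
Variables (R : realType) (I : finType) (p : I -> R).
Hypothesis p_ge0 : forall i, 0 <= p i.

Lemma markov_event (g : I -> R) (a : R) (P : pred I) :
  (forall i, 0 <= g i) -> (forall i, P i -> a <= g i) ->
  a * \sum_(i | P i) p i <= \sum_i p i * g i.
Proof.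
move=> g_ge0 hPg; rewrite mulr_sumr [X in _ <= X](bigID P) /=.
rewrite -[X in X <= _]addr0; apply: lerD; last by apply: sumr_ge0 => i _; apply: mulr_ge0.
by apply: ler_sum => i Pi; rewrite mulrC; apply: ler_wpM2l => //; apply: hPg.
Qed.

Lemma markov_half_gt (f : I -> R) (t : R) : (forall i, 0 <= f i) ->
  t * \sum_(i | ~~ (2 * f i <= t)) p i <= 2 * \sum_i p i * f i.
Proof.
move=> f_ge0; rewrite [X in _ <= X]mulr_sumr.
under [X in _ <= X]eq_bigr => i _ do rewrite mulrCA.
by apply: markov_event => i; rewrite ?mulr_ge0 // -ltNge => /ltW.
Qed.

Lemma markov_half_le (f : I -> R) (t : R) : \sum_i p i = 1 -> (forall i, f i <= t) ->
  t * \sum_(i | 2 * f i <= t) p i <= 2 * (t - \sum_i p i * f i).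
Proof.
move=> p1 f_le; have -> : t - \sum_i p i * f i = \sum_i p i * (t - f i).
  by rewrite -[t in LHS]mul1r -p1 mulr_suml -sumrB; apply: eq_bigr => i _; rewrite mulrBr.
rewrite [X in _ <= X]mulr_sumr; under [X in _ <= X]eq_bigr => i _ do rewrite mulrCA.
by apply: markov_event => i; rewrite ?mulr_ge0 ?subr_ge0 //; lra.
Qed.

Lemma ler_mul_llr (q q' l c : R) : 0 <= q -> q * expR (- l) <= q' ->
  q * (1 + c) - expR c * q' <= q * l.
Proof.
move=> q_ge0 hq.
have hexp : q * (1 + (c - l)) <= expR c * q'.
  apply: le_trans (_ : q * expR (c - l) <= _); first by apply: ler_wpM2l => //; apply: expR_ge1Dx.
  by rewrite expRD mulrCA; apply: ler_wpM2l => //; apply: expR_ge0.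
lra.
Qed.

Lemma llr_event_lb (p' l : I -> R) (P : pred I) (c : R) :
  (forall i, 0 <= p' i) -> \sum_i p i = 1 -> \sum_i p' i = 1 ->
  (forall i, p i * expR (- l i) <= p' i) -> 0 <= c ->
  \sum_(i | ~~ P i) p i <= 1 / 2 -> expR c * \sum_(i | P i) p' i <= 1 / 2 ->
  c / 2 - 1 / 2 <= \sum_i p i * l i.
Proof.
move=> p'_ge0 p1 p'1 hl c_ge0 hX hY'.
have hP (d : R) (Q : pred I) :
    d * \sum_(i | Q i) p i + \sum_(i | Q i) p i - expR d * \sum_(i | Q i) p' i
    <= \sum_(i | Q i) p i * l i.
  rewrite !mulr_sumr -big_split -sumrB /=; apply: ler_sum => i _.
  by have := ler_mul_llr d (p_ge0 i) (hl i); rewrite mulrDr mulr1; lra.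
rewrite [X in _ <= X](bigID P) /=.
have hPc := hP c P; have := hP 0 (predC P).
rewrite expR0 mul0r add0r mul1r /= => hnP.
rewrite (bigID P) /= in p1; rewrite (bigID P) /= in p'1.
have : 0 <= \sum_(i | P i) p' i by exact: sumr_ge0.
have : c * (1 / 2) <= c * \sum_(i | P i) p i by apply: ler_wpM2l => //; lra.
lra.
Qed.

End FiniteWeights.

Lemma sum_pair (R : realType) (A B : finType) (F : A * B -> R) :
  \sum_(x : A * B) F x = \sum_a \sum_b F (a, b).
Proof. by rewrite pair_bigA; apply: eq_bigr => [[]]. Qed.

Section Bernoulli.
Variable R : realType.

Lemma bern_ge0 (p : R) b : 0 <= p <= 1 -> 0 <= bern p b.
Proof. by case: b => /andP[? ?] /=; lra. Qed.

Lemma sum_bern (p : R) : \sum_b bern p b = 1.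
Proof. by rewrite big_bool /= addrC subrK. Qed.

Lemma sum_bern_const (p : R) (c : R) : \sum_b bern p b * c = c.
Proof. by rewrite -mulr_suml sum_bern mul1r. Qed.

Lemma sum_bern_const2 (p p' : R) (c : R) :
  \sum_a bern p a * \sum_b bern p' b * c = c.
Proof. by under eq_bigr => a _ do rewrite sum_bern_const; rewrite sum_bern_const. Qed.

Lemma sum_ffun_bern_prod (K : nat) (m : 'I_K -> R) (j : 'I_K) (g : bool -> R) :
  \sum_(f : {ffun 'I_K -> bool}) (\prod_k bern (m k) (f k)) * g (f j) =
  \sum_b bern (m j) b * g b.
Proof.
pose H k b := bern (m k) b * (if k == j then g b else 1).
transitivity (\sum_(f : {ffun 'I_K -> bool}) \prod_k H k (f k)).
  apply: eq_bigr => f _; rewrite /H big_split /=; congr (_ * _).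
  by rewrite (bigD1 j) //= eqxx big1 ?mulr1 // => k /negbTE ->.
rewrite -(bigA_distr_bigA H) (bigD1 j) //= [X in _ * X]big1 ?mulr1.
  by apply: eq_bigr => b _; rewrite /H eqxx.
by move=> k /negbTE hk; rewrite -(sum_bern (m k)); apply: eq_bigr => b _; rewrite /H hk mulr1.
Qed.

End Bernoulli.

Definition observation (K : nat) : Type := ('I_K * bool * bool)%type.

Section Model.
Variables (R : realType) (K : nat) (lam : R) (mu : 'I_K -> R) (pol : policy R K).

Definition obs_prob (o : seq (observation K)) (y : observation K) : R :=
  bern lam y.2 * bern (mu y.1.1) y.1.2 * pol o y.1.1.

Lemma sum_step_prob (past : seq (step K)) (J : 'I_K -> 'I_K)
    (G : bool -> 'I_K -> bool -> R) :
  \sum_x step_prob lam mu pol past x * G (arr x) (sched x) (srv x (J (sched x))) =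
  \sum_k pol (map (@obs K) past) k *
    \sum_a bern lam a * \sum_r bern (mu (J k)) r * G a k r.
Proof.
rewrite !sum_pair; under eq_bigr => a _ do rewrite exchange_big.
rewrite exchange_big /=; apply: eq_bigr => k _.
rewrite mulr_sumr; apply: eq_bigr => a _ /=.
pose c := pol (map (@obs K) past) k * bern lam a.
rewrite mulrA mulr_sumr.
rewrite (eq_bigr (fun r => bern (mu (J k)) r * (c * G a k r))) => [|r _]; last first.
  by rewrite /c; ring.
rewrite -(sum_ffun_bern_prod mu (J k) (fun r => c * G a k r)).
by apply: eq_bigr => f _; rewrite /step_prob /c /=; ring.
Qed.

Lemma sum_obs_prob (o : seq (observation K)) (G : bool -> 'I_K -> bool -> R) :
  \sum_y obs_prob o y * G y.2 y.1.1 y.1.2 =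
  \sum_k pol o k * \sum_a bern lam a * \sum_r bern (mu k) r * G a k r.
Proof.
rewrite !sum_pair; apply: eq_bigr => k _.
rewrite exchange_big mulr_sumr; apply: eq_bigr => a _.
rewrite !mulr_sumr; apply: eq_bigr => r _.
by rewrite /obs_prob /=; ring.
Qed.

Lemma traj_prob_obs t (F : seq (observation K) -> R) :
  \sum_(w : t.-tuple (step K)) traj_prob lam mu pol w * F (map (@obs K) w) =
  \sum_(o : t.-tuple (observation K)) path_prob obs_prob o * F o.
Proof.
elim: t F => [|t IH] F; first by rewrite !big_tuple0 path_prob0 /traj_prob big_ord0.
rewrite (sum_path_prob_rcons _ t (fun u => F (map (@obs K) u))).
rewrite (sum_path_prob_rcons _ t F) -(IH (fun o => \sum_y obs_prob o y * F (rcons o y))).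
apply: eq_bigr => w _; congr (_ * _); under eq_bigr => x _ do rewrite map_rcons.
rewrite (sum_step_prob w id (fun a k r => F (rcons (map (@obs K) w) (k, r, a)))).
rewrite -(sum_obs_prob _ (fun a k r => F (rcons (map (@obs K) w) (k, r, a)))).
by apply: eq_bigr => [[[k r] a]].
Qed.

Hypothesis hpol : valid_policy pol.
Hypothesis hlam : 0 <= lam <= 1.
Hypothesis hmu : forall k, 0 <= mu k <= 1.

Lemma step_prob_ge0 past x : 0 <= step_prob lam mu pol past x.
Proof.
apply: mulr_ge0; last by case: hpol.
by apply: mulr_ge0; [exact: bern_ge0 | apply: prodr_ge0 => k _; exact: bern_ge0].
Qed.

Lemma obs_prob_ge0 o y : 0 <= obs_prob o y.
Proof. by apply: mulr_ge0; [apply: mulr_ge0; exact: bern_ge0 | case: hpol]. Qed.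

Lemma sum_obs_prob1 o : \sum_y obs_prob o y = 1.
Proof.
have := sum_obs_prob o (fun _ _ _ => 1); under eq_bigr => y _ do rewrite mulr1.
move=> ->; rewrite -[RHS](proj2 hpol o); apply: eq_bigr => k _.
by rewrite sum_bern_const2 mulr1.
Qed.

Lemma sum_obs_prob_sched o k :
  \sum_y obs_prob o y * ((y.1.1 == k)%:R : R) = pol o k.
Proof.
rewrite (sum_obs_prob o (fun _ k' _ => ((k' == k)%:R : R))).
under eq_bigr => j _ do rewrite sum_bern_const2.
by rewrite (bigD1 k) //= eqxx mulr1 big1 ?addr0 // => j /negbTE ->; rewrite mulr0.
Qed.

Lemma sum_step_prob1 past : \sum_x step_prob lam mu pol past x = 1.
Proof.
have := sum_step_prob past id (fun _ _ _ => 1); under eq_bigr => x _ do rewrite mulr1.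
move=> ->; rewrite -[RHS](proj2 hpol (map (@obs K) past)); apply: eq_bigr => k _.
by rewrite sum_bern_const2 mulr1.
Qed.

Lemma sum_traj_prob t : \sum_(w : t.-tuple (step K)) traj_prob lam mu pol w = 1.
Proof. exact: sum_path_prob sum_step_prob1 t. Qed.

End Model.

Definition traj_mean (R : realType) (K : nat) (lam : R) (mu : 'I_K -> R) (pol : policy R K)
    t (F : seq (step K) -> R) : R :=
  \sum_(w : t.-tuple (step K)) traj_prob lam mu pol w * F w.

Section GenieDominance.
Variables (R : realType) (K : nat) (lam : R) (mu : 'I_K -> R) (pol : policy R K).
Variable ks : 'I_K.
Hypothesis hpol : valid_policy pol.
Hypothesis hlam : 0 <= lam <= 1.
Hypothesis hmu : forall k, 0 <= mu k <= 1.
Hypothesis mu_ks_max : forall k, mu k <= mu ks.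

Definition next_mean (h : nat -> R) (p : R) (q : nat) : R :=
  \sum_a bern lam a * \sum_r bern p r * h (q + a - r)%N.

Lemma next_meanE h p q : next_mean h p q =
  lam * (p * h q + (1 - p) * h q.+1) + (1 - lam) * (p * h q.-1 + (1 - p) * h q).
Proof. by rewrite /next_mean !big_bool /= addnK !subn0 addn1 addn0 subn1. Qed.

Lemma next_meanB h p p' q : next_mean h p q - next_mean h p' q =
  (p' - p) * (lam * (h q.+1 - h q) + (1 - lam) * (h q - h q.-1)).
Proof. by rewrite !next_meanE; ring. Qed.

Lemma next_mean_homo h p : 0 <= p <= 1 ->
  {homo h : m n / (m <= n)%N >-> m <= n} ->
  {homo next_mean h p : m n / (m <= n)%N >-> m <= n}.
Proof.
move=> hp hh m n hmn; apply: ler_sum => a _; apply: ler_wpM2l; first exact: bern_ge0.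
apply: ler_sum => r _; apply: ler_wpM2l; first exact: bern_ge0.
by apply: hh; rewrite leq_sub2r // leq_add2r.
Qed.

Lemma next_mean_antitone h p p' q : {homo h : m n / (m <= n)%N >-> m <= n} ->
  p <= p' -> next_mean h p' q <= next_mean h p q.
Proof.
move=> hh hpp; rewrite -subr_ge0 next_meanB; case/andP: hlam => l0 l1.
apply: mulr_ge0; first by rewrite subr_ge0.
by apply: addr_ge0; apply: mulr_ge0; rewrite ?subr_ge0 ?hh ?leq_pred //; lra.
Qed.

Lemma next_mean_nat p p' q : p <= p' ->
  next_mean (fun n => n%:R) p' q + lam * (p' - p) <= next_mean (fun n => n%:R) p q.
Proof.
move=> hpp; rewrite -subr_ge0.
have -> : next_mean (fun n => n%:R) p q - (next_mean (fun n => n%:R) p' q + lam * (p' - p))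
    = (p' - p) * ((1 - lam) * (q%:R - q.-1%:R)).
  by rewrite opprD addrA next_meanB -natr1; ring.
case/andP: hlam => l0 l1; apply: mulr_ge0; first by rewrite subr_ge0.
by apply: mulr_ge0; rewrite subr_ge0 ?ler_nat ?leq_pred.
Qed.

Lemma next_mean_policy q0 (w : seq (step K)) (h : nat -> R) :
  \sum_x step_prob lam mu pol w x * h (qlen q0 (@pol_service K) (rcons w x)) =
  \sum_k pol (map (@obs K) w) k * next_mean h (mu k) (qlen q0 (@pol_service K) w).
Proof.
rewrite -(sum_step_prob _ _ _ w id (fun a _ r => h (qlen q0 (@pol_service K) w + a - r)%N)).
by apply: eq_bigr => x _; rewrite /qlen foldl_rcons.
Qed.

Lemma next_mean_genie q0 (w : seq (step K)) (h : nat -> R) :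
  \sum_x step_prob lam mu pol w x * h (qlen q0 (genie_service ks) (rcons w x)) =
  next_mean h (mu ks) (qlen q0 (genie_service ks) w).
Proof.
transitivity (\sum_k pol (map (@obs K) w) k *
    next_mean h (mu ks) (qlen q0 (genie_service ks) w)).
  rewrite -(sum_step_prob _ _ _ w (fun=> ks)
    (fun a _ r => h (qlen q0 (genie_service ks) w + a - r)%N)).
  by apply: eq_bigr => x _; rewrite /qlen foldl_rcons.
by rewrite -mulr_suml (proj2 hpol) mul1r.
Qed.

(* Stochastic dominance of the genie queue, by backward induction: the conditional
   mean of a nondecreasing function of the future queue is again nondecreasing. *)
Lemma genie_dominance t q0 (h : nat -> R) : {homo h : m n / (m <= n)%N >-> m <= n} ->
  traj_mean lam mu pol t (fun w => h (qlen q0 (genie_service ks) w)) <=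
  traj_mean lam mu pol t (fun w => h (qlen q0 (@pol_service K) w)).
Proof.
elim: t h => [|t IH] h hh; first by rewrite /traj_mean !big_tuple0.
rewrite /traj_mean !(sum_path_prob_rcons _ t (fun u => h (qlen q0 _ u))).
under eq_bigr => w _ do rewrite next_mean_genie.
under [X in _ <= X]eq_bigr => w _ do rewrite next_mean_policy.
apply: le_trans (IH _ (next_mean_homo (hmu ks) hh)) _.
apply: ler_sum => w _; apply: ler_wpM2l; first exact: (path_prob_ge0 (step_prob_ge0 hpol hlam hmu)).
rewrite -[X in X <= _]mul1r -(proj2 hpol (map (@obs K) w)) mulr_suml.
by apply: ler_sum => k _; apply: ler_wpM2l; [exact: (proj1 hpol) | exact: next_mean_antitone].
Qed.

Lemma regret_step_ge_gap t q0 :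
  lam * traj_mean lam mu pol t (fun w => \sum_k pol (map (@obs K) w) k * (mu ks - mu k)) <=
  traj_mean lam mu pol t.+1 (fun w =>
    (qlen q0 (@pol_service K) w)%:R - (qlen q0 (genie_service ks) w)%:R).
Proof.
rewrite /traj_mean; under [X in _ <= X]eq_bigr => w _ do rewrite mulrBr.
rewrite sumrB !(sum_path_prob_rcons _ t (fun u => (qlen q0 _ u)%:R)).
under [X in _ <= X - _]eq_bigr => w _ do rewrite next_mean_policy.
under [X in _ <= _ - X]eq_bigr => w _ do rewrite next_mean_genie.
have nat_homo : {homo (fun n : nat => n%:R : R) : m n / (m <= n)%N >-> m <= n}.
  by move=> m n; rewrite ler_nat.
rewrite lerBrDr; apply: le_trans (lerD (lexx _)
  (genie_dominance t q0 (next_mean_homo (hmu ks) nat_homo))) _.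
rewrite mulr_sumr -big_split /=; apply: ler_sum => w _.
rewrite mulrCA -mulrDr; apply: ler_wpM2l;
  first exact: (path_prob_ge0 (step_prob_ge0 hpol hlam hmu)).
set Q := qlen q0 _ w; set o := map (@obs K) w.
have -> : next_mean (fun n => n%:R) (mu ks) Q =
    \sum_k pol o k * next_mean (fun n => n%:R) (mu ks) Q.
  by rewrite -mulr_suml (proj2 hpol) mul1r.
rewrite mulr_sumr -big_split; apply: ler_sum => k _ /=.
rewrite mulrCA -mulrDr; apply: ler_wpM2l; first exact: (proj1 hpol).
by rewrite addrC next_mean_nat.
Qed.

End GenieDominance.

Lemma qlen_le_size (K : nat) (s1 s2 : step K -> bool) (w : seq (step K)) q1 q2 n :
  (q1 <= q2 + n)%N -> (qlen q1 s1 w <= qlen q2 s2 w + n + size w)%N.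
Proof.
elim: w q1 q2 n => [|x w IH] q1 q2 n /=; first by rewrite addn0.
move=> hq; rewrite -addSnnS -addnS; apply: IH; lia.
Qed.

Section SeriesMean.
Variable R : realType.

Lemma lim_series_mul_ge (pi c : nat -> R) (d B : R) :
  (forall n, 0 <= pi n) -> series pi @ \oo --> (1 : R) ->
  (forall n, d <= c n) -> (forall n, c n <= B) ->
  d <= limn (series (fun n => pi n * c n)).
Proof.
move=> pi_ge0 pi1 hd hB.
have hlim : limn (series pi) = 1 by apply: cvg_lim.
have pi_cvg : cvgn (series pi) by apply/cvg_ex; exists 1.
have pi_le1 n : series pi n <= 1.
  by rewrite -hlim; apply: nondecreasing_cvgn_le => //; apply: nondecreasing_series.
pose u n := pi n * (c n - d).
have u_ge0 n : 0 <= u n by apply: mulr_ge0 => //; rewrite subr_ge0.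
have u_nd : {homo series u : n m / (n <= m)%N >-> n <= m}.
  by apply: nondecreasing_series => k _ _.
have u_cvg : cvgn (series u).
  apply: nondecreasing_is_cvgn => //; exists (B - d) => _ [n _ <-].
  apply: le_trans (_ : \sum_(0 <= k < n) pi k * (B - d) <= _).
    by apply: ler_sum => k _; apply: ler_wpM2l => //; rewrite lerD2r.
  rewrite -mulr_suml -[X in _ <= X]mul1r; apply: ler_wpM2r; last exact: pi_le1.
  by rewrite subr_ge0 (le_trans (hd 0)).
have -> : (fun n => pi n * c n) = u + d *: pi.
  by apply/funext => n; rewrite /u !fctE /GRing.scale /=; ring.
rewrite lim_seriesD //; last exact: is_cvg_seriesZ.
rewrite lim_seriesZ // hlim.
have : series u 0 <= limn (series u) by apply: nondecreasing_cvgn_le.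
by rewrite /series /= big_geq // /GRing.scale /=; lra.
Qed.

End SeriesMean.

Section RegretLowerBound.
Variables (R : realType) (K : nat) (lam : R) (mu : 'I_K -> R) (pol : policy R K).
Variables (ks : 'I_K) (pi : nat -> R).
Hypothesis hpol : valid_policy pol.
Hypothesis hlam : 0 <= lam <= 1.
Hypothesis hmu : forall k, 0 <= mu k <= 1.
Hypothesis mu_ks_max : forall k, mu k <= mu ks.
Hypothesis pi_ge0 : forall n, 0 <= pi n.
Hypothesis pi1 : series pi @ \oo --> (1 : R).

Lemma queue_regret_ge_gap t :
  lam * traj_mean lam mu pol t (fun w => \sum_k pol (map (@obs K) w) k * (mu ks - mu k))
  <= queue_regret lam mu ks pol pi t.+1.
Proof.
apply: (lim_series_mul_ge (B := t.+1%:R)) => // q0.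
  exact: regret_step_ge_gap.
apply: le_trans (_ : \sum_(w : t.+1.-tuple (step K)) traj_prob lam mu pol w * t.+1%:R <= _).
  apply: ler_sum => w _; apply: ler_wpM2l;
    first exact: (path_prob_ge0 (step_prob_ge0 hpol hlam hmu)).
  have := qlen_le_size (@pol_service K) (genie_service ks) w (leq_addr 0 q0).
  by rewrite addn0 size_tuple lerBlDr -natrD ler_nat addnC.
by rewrite -mulr_suml sum_traj_prob // mul1r.
Qed.

End RegretLowerBound.

Lemma natr_count (R : realType) (T : Type) (a : pred T) (s : seq T) :
  (count a s)%:R = \sum_(x <- s) (a x)%:R :> R.
Proof. by elim: s => [|x s IH]; rewrite ?big_nil ?big_cons //= natrD IH. Qed.

Section ExpectedPulls.
Variables (R : realType) (K : nat) (lam : R) (mu : 'I_K -> R) (pol : policy R K).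
Hypothesis hpol : valid_policy pol.
Hypothesis hlam : 0 <= lam <= 1.
Hypothesis hmu : forall k, 0 <= mu k <= 1.

Lemma expected_pulls_ge0 k t : 0 <= expected_pulls lam mu pol k t.
Proof.
apply: sumr_ge0 => w _; apply: mulr_ge0 => //.
exact: (path_prob_ge0 (step_prob_ge0 hpol hlam hmu)).
Qed.

Lemma expected_pullsS k t : expected_pulls lam mu pol k t.+1 =
  expected_pulls lam mu pol k t + traj_mean lam mu pol t (fun w => pol (map (@obs K) w) k).
Proof.
rewrite /expected_pulls /traj_mean.
under eq_bigr => w _ do rewrite natr_count.
under [in RHS]eq_bigr => w _ do rewrite natr_count.
rewrite (sum_path_prob_additive (sum_step_prob1 lam mu hpol)); congr (_ + _).
apply: eq_bigr => w _; congr (_ * _).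
rewrite (sum_step_prob _ _ _ w id (fun _ k' _ => (k' == k)%:R)).
under eq_bigr => j _ do rewrite sum_bern_const2.
by rewrite (bigD1 k) //= eqxx mulr1 big1 ?addr0 // => j /negbTE ->; rewrite mulr0.
Qed.

Lemma sum_expected_pulls t : \sum_k expected_pulls lam mu pol k t = t%:R.
Proof.
rewrite /expected_pulls exchange_big /=; under eq_bigr => w _ do rewrite -mulr_sumr.
transitivity (\sum_(w : t.-tuple (step K)) traj_prob lam mu pol w * t%:R).
  apply: eq_bigr => w _; rewrite (_ : t%:R = (size w)%:R); last by rewrite size_tuple.
  congr (_ * _).
  under eq_bigr => j _ do rewrite natr_count.
  rewrite exchange_big /= -sum1_size natr_sum; apply: eq_bigr => x _.
  by rewrite (bigD1 (sched x)) //= eqxx big1 ?addr0 // => j; rewrite eq_sym => /negbTE ->.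
by rewrite -mulr_suml sum_traj_prob // mul1r.
Qed.

Lemma expected_pulls_obs k t : expected_pulls lam mu pol k t =
  \sum_(o : t.-tuple (observation K)) path_prob (obs_prob lam mu pol) o *
    (count (fun y : observation K => y.1.1 == k) o)%:R.
Proof.
rewrite -(traj_prob_obs _ _ _ _ (fun o => (count (fun y : observation K => y.1.1 == k) o)%:R)).
by apply: eq_bigr => w _; rewrite count_map.
Qed.

End ExpectedPulls.

Section LogLikelihoodRatio.
Variables (R : realType) (K : nat) (lam : R) (mu mu' : 'I_K -> R) (pol : policy R K).
Variable k : 'I_K.
Hypothesis hpol : valid_policy pol.
Hypothesis hlam : 0 <= lam <= 1.
Hypothesis hmu : forall j, 0 <= mu j <= 1.
Hypothesis mu'E : forall j, j != k -> mu' j = mu j.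
Hypothesis mu'k_01 : 0 < mu' k < 1.

(* Only the observed service of server [k] carries information about [mu k]. *)
Definition obs_llr (y : observation K) : R :=
  if y.1.1 == k then ln (bern (mu k) y.1.2 / bern (mu' k) y.1.2) else 0.

Lemma obs_prob_llr o y :
  obs_prob lam mu pol o y * expR (- obs_llr y) <= obs_prob lam mu' pol o y.
Proof.
rewrite /obs_prob /obs_llr; case: eqP => [->|/eqP hj]; last by rewrite oppr0 expR0 mulr1 mu'E.
set r := y.1.2; have b'_gt0 : 0 < bern (mu' k) r by case/andP: mu'k_01; case: r => /=; lra.
have [b0|b_neq0] := eqVneq (bern (mu k) r) 0.
  rewrite b0 mulr0 !mul0r; apply: mulr_ge0; last exact: (proj1 hpol).
  by apply: mulr_ge0; [exact: bern_ge0 | exact: ltW].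
have b_gt0 : 0 < bern (mu k) r by rewrite lt0r b_neq0 bern_ge0.
rewrite expRN lnK ?posrE ?divr_gt0 // invf_div.
by rewrite [X in X <= _](_ : _ = bern lam y.2 * bern (mu' k) r * pol o k) //; field.
Qed.

Lemma sum_obs_prob_llr o :
  \sum_y obs_prob lam mu pol o y * obs_llr y =
  bern_kl (mu k) (mu' k) * \sum_y obs_prob lam mu pol o y * (y.1.1 == k)%:R.
Proof.
rewrite sum_obs_prob_sched (sum_obs_prob _ _ _ o
  (fun _ j r => if j == k then ln (bern (mu k) r / bern (mu' k) r) else 0)).
rewrite (bigD1 k) //= eqxx [X in _ + X]big1 ?addr0 => [|j /negbTE ->]; last first.
  by rewrite sum_bern_const2 mulr0.
rewrite (eq_bigr (fun a => bern lam a * bern_kl (mu k) (mu' k))) => [|a _]; last first.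
  by rewrite big_bool.
by rewrite sum_bern_const mulrC.
Qed.

Lemma expected_llr t :
  \sum_(o : t.-tuple (observation K)) path_prob (obs_prob lam mu pol) o * \sum_(y <- o) obs_llr y =
  bern_kl (mu k) (mu' k) * expected_pulls lam mu pol k t.
Proof.
rewrite expected_pulls_obs; under [in RHS]eq_bigr => o _ do rewrite natr_count.
exact: (sum_path_prob_additive_scale (sum_obs_prob1 lam mu hpol) t sum_obs_prob_llr).
Qed.

End LogLikelihoodRatio.

Section BernoulliKL.
Variable R : realType.

Lemma mul_ln_div_ge (a b : R) : 0 <= a -> 0 < b -> a - b <= a * ln (a / b).
Proof.
move=> a_ge0 b_gt0; have [->|a_neq0] := eqVneq a 0; first by rewrite mul0r sub0r oppr_le0 ltW.
have a_gt0 : 0 < a by rewrite lt0r a_neq0.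
have := @le_ln1Dx R (b / a - 1); rewrite subrKC => /(_ _)/wrap[].
  by have := divr_gt0 b_gt0 a_gt0; lra.
rewrite -[b / a]invf_div lnV ?posrE ?divr_gt0 // => hln.
have : a * (b / a - 1) = b - a by field; rewrite gt_eqF.
have := ler_wpM2l (ltW a_gt0) hln; rewrite mulrN; lra.
Qed.

Lemma bern_kl_ge0 (p q : R) : 0 <= p <= 1 -> 0 < q < 1 -> 0 <= bern_kl p q.
Proof.
move=> /andP[p0 p1] /andP[q0 q1]; rewrite /bern_kl.
have := mul_ln_div_ge p0 q0; have := @mul_ln_div_ge (1 - p) (1 - q).
rewrite subr_ge0 subr_gt0 => /(_ p1 q1); lra.
Qed.

Lemma mul_ln_div_split (a b c : R) : 0 <= a -> 0 < b -> 0 < c ->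
  a * ln (a / c) = a * ln (a / b) + a * ln (b / c).
Proof.
move=> a_ge0 b_gt0 c_gt0; have [->|a_neq0] := eqVneq a 0; first by rewrite !mul0r addr0.
have a_gt0 : 0 < a by rewrite lt0r a_neq0.
by rewrite !ln_div ?posrE //; ring.
Qed.

(* Three-point identity: the bracket is the derivative of [bern_kl p q] in [p] at [p2]. *)
Lemma bern_klB (p1 p2 q : R) : 0 <= p1 <= 1 -> 0 < p2 < 1 -> 0 < q < 1 ->
  bern_kl p1 q - bern_kl p2 q =
  bern_kl p1 p2 + (p1 - p2) * (ln (p2 / q) - ln ((1 - p2) / (1 - q))).
Proof.
move=> /andP[p10 p11] /andP[p20 p21] /andP[q0 q1]; rewrite /bern_kl.
rewrite (mul_ln_div_split p10 p20 q0) (@mul_ln_div_split (1 - p1) (1 - p2) (1 - q)).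
- by ring.
all: by rewrite ?subr_ge0 ?subr_gt0.
Qed.

Lemma bern_kl_antitone (p1 p2 q : R) : 0 <= p1 -> p1 <= p2 -> p2 < q -> q < 1 ->
  bern_kl p2 q <= bern_kl p1 q.
Proof.
move=> p10 p12 p2q q1; have [p20|p2_neq0] := eqVneq p2 0.
  by have -> : p1 = p2 by rewrite p20 in p12 *; lra.
have p2_gt0 : 0 < p2 by rewrite lt0r p2_neq0 /=; lra.
rewrite -subr_ge0 bern_klB; last by apply/andP; lra.
- apply: addr_ge0; first by apply: bern_kl_ge0; apply/andP; lra.
  apply: mulr_le0; first by lra.
  rewrite subr_le0 (@le_trans _ _ 0) //.
    by apply: ln_le0; rewrite ler_pdivrMr; lra.
  by apply: ln_ge0; rewrite ler_pdivlMr; lra.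
- by apply/andP; lra.
- by apply/andP; lra.
Qed.

End BernoulliKL.

Section ChangeOfMeasure.
Variables (R : realType) (K : nat) (lam : R) (mu mu' : 'I_K -> R) (pol : policy R K).
Variable k : 'I_K.
Hypothesis hpol : valid_policy pol.
Hypothesis hlam : 0 <= lam <= 1.
Hypothesis hmu : forall j, 0 <= mu j <= 1.
Hypothesis hmu' : forall j, 0 <= mu' j <= 1.
Hypothesis mu'E : forall j, j != k -> mu' j = mu j.
Hypothesis mu'k_01 : 0 < mu' k < 1.

(* If [k] is rarely pulled under [mu] but, being optimal, almost always pulled under
   [mu'], the two observation laws are far apart; the event "at most half of the pulls
   go to [k]" witnesses it. *)
Lemma kl_expected_pulls_ge t (A B : R) : 0 < B ->
  expected_pulls lam mu pol k t <= A ->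
  \sum_(j | j != k) expected_pulls lam mu' pol j t <= B ->
  4 * A <= t%:R -> 4 * B <= t%:R ->
  ln (t%:R / (4 * B)) / 2 - 1 / 2 <= bern_kl (mu k) (mu' k) * expected_pulls lam mu pol k t.
Proof.
move=> B_gt0 hA hB hAt hBt; have t_gt0 : 0 < t%:R :> R by lra.
pose p := path_prob (obs_prob lam mu pol) (t := t).
pose p' := path_prob (obs_prob lam mu' pol) (t := t).
pose cnt (o : t.-tuple (observation K)) := (count (fun y : observation K => y.1.1 == k) o)%:R : R.
have cnt_le o : cnt o <= t%:R by rewrite ler_nat -[X in (_ <= X)%N](size_tuple o) count_size.
have p_ge0 o : 0 <= p o := path_prob_ge0 (obs_prob_ge0 hpol hlam hmu) o.
have p'_ge0 o : 0 <= p' o := path_prob_ge0 (obs_prob_ge0 hpol hlam hmu') o.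
have p'1 : \sum_o p' o = 1 := sum_path_prob (sum_obs_prob1 lam mu' hpol) t.
have hX : \sum_(o | ~~ (2 * cnt o <= t%:R)) p o <= 1 / 2.
  have := markov_half_gt p_ge0 t%:R (fun o => ler0n _ (count _ o) : 0 <= cnt o).
  rewrite -(expected_pulls_obs lam mu pol k t) => hM.
  by rewrite -(ler_pM2l t_gt0); lra.
pose c := ln (t%:R / (4 * B)).
have expRc : expR c = t%:R / (4 * B) by rewrite lnK // posrE divr_gt0 ?mulr_gt0.
have hY' : expR c * \sum_(o | 2 * cnt o <= t%:R) p' o <= 1 / 2.
  have := markov_half_le p'_ge0 p'1 cnt_le; rewrite -(expected_pulls_obs lam mu' pol k t).
  have := sum_expected_pulls lam mu' hpol t; rewrite (bigD1 k) //= => hsum.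
  by rewrite expRc mulrAC ler_pdivrMr ?mulr_gt0 //; lra.
have c_ge0 : 0 <= c by apply: ln_ge0; rewrite ler_pdivlMr ?mulr_gt0 ?mul1r.
have := llr_event_lb (P := fun o => 2 * cnt o <= t%:R) p_ge0 p'_ge0
  (sum_path_prob (sum_obs_prob1 lam mu hpol) t) p'1
  (path_prob_change_measure (obs_prob_ge0 hpol hlam hmu)
    (obs_prob_llr hpol hlam hmu mu'E mu'k_01) (t := t))
  c_ge0 hX hY'.
by rewrite -(expected_llr lam mu mu' k hpol).
Qed.

End ChangeOfMeasure.

Lemma eventually_mul_powR_le (R : realType) (C a : R) : 0 <= a < 1 ->
  exists T : nat, forall t : nat, (T <= t)%N -> C * t%:R `^ a <= t%:R.
Proof.
move=> /andP[a0 a1]; pose b := 1 - a; have b_gt0 : 0 < b by rewrite subr_gt0.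
exists (Num.Def.archi_bound (`|C| `^ b^-1)) => t ht.
have Ct : `|C| `^ b^-1 < t%:R.
  by apply: lt_le_trans (archi_boundP (powR_ge0 _ _)) _; rewrite ler_nat.
have t_gt0 : 0 < t%:R :> R by apply: le_lt_trans Ct; apply: powR_ge0.
have Cb : `|C| <= t%:R `^ b.
  have {1}-> : `|C| = (`|C| `^ b^-1) `^ b by rewrite -powRrM mulVf ?lt0r_neq0 ?powRr1.
  by apply: ge0_ler_powR; rewrite ?nnegrE ?powR_ge0 ?ltW.
have tE : t%:R `^ a * t%:R `^ b = t%:R :> R.
  rewrite -powRD; last by rewrite lt0r_neq0 ?implybT.
  by rewrite /b subrKC powRr1 // ltW.
rewrite -[X in _ <= X]tE mulrC; apply: ler_wpM2l; first exact: powR_ge0.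
exact: le_trans (ler_norm C) Cb.
Qed.

Section Consistency.
Variables (R : realType) (K : nat) (alpha : R) (pol : policy R K).
Hypothesis hcons : alpha_consistent alpha pol.

Lemma consistent_subopt_pulls lam mu ks : instance lam mu ks ->
  exists2 C : R, 0 < C & exists T : nat, forall t : nat, (T <= t)%N ->
    \sum_(j | j != ks) expected_pulls lam mu pol j t <= C * t%:R `^ alpha.
Proof.
move=> hinst.
have : forall j : 'I_K, exists CT : R * nat, j != ks -> forall t : nat, (CT.2 <= t)%N ->
    expected_pulls lam mu pol j t <= CT.1 * t%:R `^ alpha.
  move=> j; have [->|hj] := eqVneq j ks; first by exists (0, 0%N) => /eqP[].
  by have [C [T hCT]] := hcons hinst hj; exists (C, T).
move=> /choice[f hf]; exists (1 + \sum_j `|(f j).1|).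
  by rewrite ltr_pwDl // sumr_ge0.
exists (\sum_j (f j).2)%N => t ht.
apply: le_trans (_ : \sum_(j | j != ks) `|(f j).1| * t%:R `^ alpha <= _).
  apply: ler_sum => j hj; apply: le_trans (hf j hj t _) _.
    by apply: leq_trans ht; rewrite (bigD1 j) //= leq_addr.
  by apply: ler_wpM2r; [exact: powR_ge0 | exact: ler_norm].
rewrite -mulr_suml; apply: ler_wpM2r; first exact: powR_ge0.
rewrite [X in _ <= 1 + X](bigID (fun j => j != ks)) /= addrCA lerDl.
by apply: addr_ge0 => //; apply: sumr_ge0.
Qed.

End Consistency.

Definition raise_rate (K : nat) (R : realType) (mu : 'I_K -> R) (k : 'I_K) (q : R) : 'I_K -> R :=
  fun j => if j == k then q else mu j.

Lemma raise_rate_instance (R : realType) K (lam : R) mu ks (k : 'I_K) (q : R) :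
  instance lam mu ks -> mu ks < q -> q <= 1 -> instance lam (raise_rate mu k q) k.
Proof.
case=> hlam [hmu [hlt hlam_ks]] hq hq1.
have mu_le j : mu j <= mu ks by have [->|/hlt/ltW] := eqVneq j ks.
have q01 : 0 <= q <= 1 by case/andP: (hmu ks) => ? ?; apply/andP; lra.
rewrite /instance /raise_rate eqxx; split; first exact: hlam.
split; first by move=> j; case: eqP.
by split; [move=> j /negbTE ->; apply: le_lt_trans (mu_le j) hq | lra].
Qed.

Lemma kl_expected_pulls_log_lb (R : realType) (K : nat) (lam : R) (mu : 'I_K -> R)
    (ks : 'I_K) (pol : policy R K) (alpha : R) (k : 'I_K) :
  instance lam mu ks -> mu ks < 1 -> 0 < alpha < 1 -> valid_policy pol ->
  alpha_consistent alpha pol -> k != ks ->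
  exists c : R, exists T : nat, forall t : nat, (T <= t)%N ->
    (1 - alpha) / 2 * ln t%:R - c <=
    bern_kl (mu k) ((mu ks + 1) / 2) * expected_pulls lam mu pol k t.
Proof.
move=> hinst mu_ks1 /andP[a0 a1] hpol hcons hk.
have [hlam [hmu _]] := hinst.
set q := (mu ks + 1) / 2; pose mu' := raise_rate mu k q.
have hinst' : instance lam mu' k by apply: raise_rate_instance hinst _ _; rewrite /q; lra.
have [_ [hmu' _]] := hinst'.
have mu'k : mu' k = q by rewrite /mu' /raise_rate eqxx.
have mu'E j : j != k -> mu' j = mu j by rewrite /mu' /raise_rate => /negbTE ->.
have mu'k_01 : 0 < mu' k < 1 by rewrite mu'k /q; case/andP: (hmu ks) => ? ?; apply/andP; lra.
have [C1 C1_gt0 [T1 h1]] := consistent_subopt_pulls hcons hinst.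
have [C2 C2_gt0 [T2 h2]] := consistent_subopt_pulls hcons hinst'.
have a01 : 0 <= alpha < 1 by rewrite ltW.
have [T3 h3] := eventually_mul_powR_le (4 * C1) a01.
have [T4 h4] := eventually_mul_powR_le (4 * C2) a01.
exists (ln (4 * C2) / 2 + 1 / 2), (T1 + T2 + T3 + T4).+1 => t ht.
have [hT1 hT2 hT3 hT4] : [/\ T1 <= t, T2 <= t, T3 <= t & T4 <= t]%N by clear -ht; split; lia.
have t_gt0 : 0 < t%:R :> R by rewrite ltr0n; clear -ht; lia.
pose ta := t%:R `^ alpha; have ta_gt0 : 0 < ta by apply: powR_gt0.
have hA : expected_pulls lam mu pol k t <= C1 * ta.
  apply: le_trans (h1 t hT1).
  rewrite (bigD1 k) //= lerDl; apply: sumr_ge0 => j _; exact: expected_pulls_ge0.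
have hAt : 4 * (C1 * ta) <= t%:R by rewrite mulrA; apply: h3.
have hBt : 4 * (C2 * ta) <= t%:R by rewrite mulrA; apply: h4.
have := @kl_expected_pulls_ge _ _ lam mu mu' pol k hpol hlam hmu hmu' mu'E mu'k_01 t
  (C1 * ta) (C2 * ta) (mulr_gt0 C2_gt0 ta_gt0) hA (h2 t hT2) hAt hBt.
suff -> : ln (t%:R / (4 * (C2 * ta))) / 2 - 1 / 2 =
    (1 - alpha) / 2 * ln t%:R - (ln (4 * C2) / 2 + 1 / 2) by rewrite mu'k.
rewrite ln_div ?posrE ?mulr_gt0 // mulrA lnM ?posrE ?mulr_gt0 // /ta ln_powR.
by field.
Qed.

Section LogGrowth.
Variable R : realType.

Lemma inv_le_ln_succ (t : nat) : (0 < t)%N ->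
  1 / t.+1%:R <= ln t.+1%:R - ln t%:R :> R.
Proof.
move=> t_gt0; have tR_gt0 : 0 < t%:R :> R by rewrite ltr0n.
have t1_gt0 : 0 < t.+1%:R :> R by rewrite ltr0n.
have hx : -1 < - (1 / t.+1%:R) :> R by rewrite ltrN2 ltr_pdivrMr // mul1r ltr1n ltnS.
have := le_ln1Dx hx.
have -> : 1 + - (1 / t.+1%:R) = t%:R / t.+1%:R :> R.
  by rewrite -natr1; field; rewrite -natr1 in t1_gt0; rewrite gt_eqF.
by rewrite ln_div ?posrE // -[ln t.+1%:R - _]opprB lerNr.
Qed.

Lemma harmonic_increments_le_ln (u : nat -> R) (c : R) (N : nat) : 0 <= c ->
  (forall s, (N <= s)%N -> u s.+1 - u s <= c / s.+1%:R) ->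
  forall n, u (N.+1 + n)%N - u N.+1 <= c * (ln (N.+1 + n)%:R - ln N.+1%:R).
Proof.
move=> c_ge0 hinc; elim=> [|n IH]; first by rewrite addn0 !subrr mulr0.
have := hinc (N.+1 + n)%N (leq_trans (leqnSn N) (leq_addr _ _)).
have := ler_wpM2l c_ge0 (inv_le_ln_succ (ltn_addr n (ltn0Sn N))).
rewrite addnS mulrA mulr1 !mulrBr; rewrite mulrBr in IH => h1 h2.
set v := c / _ in h1 h2; lra.
Qed.

Lemma log_growth_contra (u : nat -> R) (b c d : R) (N T : nat) : 0 <= c -> c < b ->
  (forall t, (T <= t)%N -> b * ln t%:R - d <= u t) ->
  (forall s, (N <= s)%N -> u s.+1 - u s <= c / s.+1%:R) -> False.
Proof.
move=> c_ge0 cb hlow hinc.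
pose M := `|d + u N.+1 - c * ln N.+1%:R|.
pose A := Num.Def.archi_bound (expR (M / (b - c))).
pose t := (N.+1 + (T + A))%N.
have hup := harmonic_increments_le_ln c_ge0 hinc (T + A).
have hlow_t := hlow t (leq_trans (leq_addr A T) (leq_addl _ _)).
have t_big : expR (M / (b - c)) < t%:R.
  apply: lt_le_trans (archi_boundP (expR_ge0 _)) _.
  by rewrite ler_nat /t addnA leq_addl.
have t_gt0 : 0 < t%:R :> R := lt_trans (expR_gt0 _) t_big.
have hM : M < (b - c) * ln t%:R.
  by rewrite mulrC -ltr_pdivrMr ?subr_gt0 // -[X in X < _]expRK ltr_ln ?posrE ?expR_gt0.
have := ler_norm (d + u N.+1 - c * ln N.+1%:R); rewrite -/M.
rewrite mulrBl in hM; rewrite mulrBr in hup; lra.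
Qed.

End LogGrowth.

Definition subopt_pulls (R : realType) (K : nat) (lam : R) (mu : 'I_K -> R)
    (pol : policy R K) (ks : 'I_K) (t : nat) : R :=
  \sum_(k | k != ks) expected_pulls lam mu pol k t.

Section QueueBandit.
Variables (R : realType) (K : nat) (lam : R) (mu : 'I_K -> R) (ks : 'I_K).
Variables (pol : policy R K) (pi : nat -> R) (alpha : R).
Hypothesis hinst : instance lam mu ks.
Hypothesis hpol : valid_policy pol.
Hypothesis pi_ge0 : forall n, 0 <= pi n.
Hypothesis pi1 : series pi @ \oo --> (1 : R).

Let hlam : 0 <= lam <= 1 := hinst.1.
Let hmu : forall k, 0 <= mu k <= 1 := hinst.2.1.

Lemma mu_ks_max k : mu k <= mu ks.
Proof. by have [->|/hinst.2.2.1/ltW] := eqVneq k ks. Qed.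

Lemma gap_gt0 : 0 < gap mu ks.
Proof.
rewrite subr_gt0; apply: bigmax_lt => [|k /hinst.2.2.1 //].
by apply: le_lt_trans hinst.2.2.2; case/andP: hlam.
Qed.

Lemma gap_le k : k != ks -> gap mu ks <= mu ks - mu k.
Proof. by move=> hk; rewrite lerD2l lerN2; apply: le_bigmax_cond. Qed.

Lemma subopt_pullsS t : subopt_pulls lam mu pol ks t.+1 - subopt_pulls lam mu pol ks t =
  traj_mean lam mu pol t (fun w => \sum_(k | k != ks) pol (map (@obs K) w) k).
Proof.
rewrite /subopt_pulls; under eq_bigr => k _ do rewrite (expected_pullsS _ _ hpol).
rewrite big_split /= addrAC subrr add0r /traj_mean exchange_big /=.
by apply: eq_bigr => w _; rewrite mulr_sumr.
Qed.

Lemma queue_regret_ge_subopt_increment t :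
  lam * gap mu ks * (subopt_pulls lam mu pol ks t.+1 - subopt_pulls lam mu pol ks t)
  <= queue_regret lam mu ks pol pi t.+1.
Proof.
apply: le_trans (queue_regret_ge_gap hpol hlam hmu mu_ks_max pi_ge0 pi1 t).
rewrite subopt_pullsS -mulrA; apply: ler_wpM2l; first by case/andP: hlam.
rewrite /traj_mean mulr_sumr; apply: ler_sum => w _; rewrite mulrCA; apply: ler_wpM2l.
  exact: (path_prob_ge0 (step_prob_ge0 hpol hlam hmu)).
rewrite [X in _ <= X](bigD1 ks) //= subrr mulr0 add0r mulr_sumr; apply: ler_sum => k hk.
by rewrite mulrC; apply: ler_wpM2l; [exact: (proj1 hpol) | exact: gap_le].
Qed.

Lemma queue_regret_ge0 t : 0 <= queue_regret lam mu ks pol pi t.+1.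
Proof.
apply: le_trans (queue_regret_ge_subopt_increment t); apply: mulr_ge0.
  by apply: mulr_ge0; [case/andP: hlam | exact: ltW gap_gt0].
rewrite subopt_pullsS; apply: sumr_ge0 => w _; apply: mulr_ge0.
  exact: (path_prob_ge0 (step_prob_ge0 hpol hlam hmu)).
by apply: sumr_ge0 => k _; exact: (proj1 hpol).
Qed.

Lemma subopt_pulls_log_lb : 0 < alpha < 1 -> alpha_consistent alpha pol -> mu ks < 1 ->
  exists c : R, exists T : nat, forall t : nat, (T <= t)%N ->
    (K%:R - 1) * ((1 - alpha) / 2 * ln t%:R) - c <=
    bern_kl (mu_min mu) ((mu ks + 1) / 2) * subopt_pulls lam mu pol ks t.
Proof.
move=> ha hcons mu_ks1.
have mu_min_ge0 : 0 <= mu_min mu.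
  by apply/bigmin_geP; split => // k _; case/andP: (hmu k).
have : forall k : 'I_K, exists cT : R * nat, k != ks -> forall t : nat, (cT.2 <= t)%N ->
    (1 - alpha) / 2 * ln t%:R - cT.1 <=
    bern_kl (mu_min mu) ((mu ks + 1) / 2) * expected_pulls lam mu pol k t.
  move=> k; have [->|hk] := eqVneq k ks; first by exists (0, 0%N) => /eqP[].
  have [c [T hcT]] := kl_expected_pulls_log_lb hinst mu_ks1 ha hpol hcons hk.
  exists (c, T) => _ t ht; apply: le_trans (hcT t ht) _.
  apply: ler_wpM2r; first exact: expected_pulls_ge0.
  apply: bern_kl_antitone => //; first exact: bigmin_le.
    by apply: le_lt_trans (mu_ks_max k) _; lra.
  by lra.
move=> /choice[g hg]; exists (\sum_(k | k != ks) (g k).1), (\sum_k (g k).2)%N => t ht.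
have cardE (x : R) : \sum_(k | k != ks) x = (K%:R - 1) * x.
  have e : \sum_(k < K) x = x + \sum_(k | k != ks) x by rewrite (bigD1 ks).
  rewrite sumr_const card_ord -mulr_natl in e.
  by apply: (addrI x); rewrite -e; ring.
rewrite -cardE -sumrB /subopt_pulls mulr_sumr; apply: ler_sum => k hk.
by apply: hg => //; apply: leq_trans ht; rewrite (bigD1 k) //= leq_addr.
Qed.

Lemma Dmu_gt0P : 0 < Dmu mu ks ->
  mu ks < 1 /\ 0 < bern_kl (mu_min mu) ((mu ks + 1) / 2).
Proof.
rewrite /Dmu; case: ifP => [mu_ks1 D_gt0|]; last by rewrite ltxx.
split => //; rewrite ltNge; apply/negP => kl_le0; move: D_gt0; rewrite ltNge => /negP; apply.
by apply: mulr_ge0_le0; [exact: ltW gap_gt0 | rewrite invr_le0].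
Qed.

(* If [Psi(t) < c0 / t] from [N] on, [KL * subopt_pulls t] grows at most like
   [a * ln t], half the rate [2 * a * ln t] forced by consistency. *)
Lemma queue_regret_infinitely_often_ge : (2 <= K)%N -> 0 < alpha < 1 ->
  alpha_consistent alpha pol -> 0 < lam -> 0 < Dmu mu ks ->
  forall N : nat, exists t : nat, (N < t)%N /\
    (lam / 4 * Dmu mu ks * (1 - alpha) * (K%:R - 1)) / t%:R <= queue_regret lam mu ks pol pi t.
Proof.
move=> hK ha hcons lam_gt0 D_gt0 N.
have [mu_ks1 KL_gt0] := Dmu_gt0P D_gt0.
set KL := bern_kl _ _ in KL_gt0; set c0 := lam / 4 * _ * _ * _.
pose a := (K%:R - 1) * (1 - alpha) / 4.
have a_gt0 : 0 < a.
  by apply: divr_gt0 => //; apply: mulr_gt0; rewrite subr_gt0 ?ltr1n //; case/andP: ha.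
have [d [T hlow]] := subopt_pulls_log_lb ha hcons mu_ks1.
apply: contrapT => hneg.
apply: (@log_growth_contra _ (fun t => KL * subopt_pulls lam mu pol ks t) (2 * a) a d N T).
- exact: ltW.
- lra.
- move=> t ht; apply: le_trans (hlow t ht).
  by rewrite (_ : 2 * a * _ = (K%:R - 1) * ((1 - alpha) / 2 * ln t%:R)) // /a; field.
move=> s hs /=.
have hreg : queue_regret lam mu ks pol pi s.+1 < c0 / s.+1%:R.
  by rewrite ltNge; apply/negP => h; apply: hneg; exists s.+1.
have lg_gt0 : 0 < lam * gap mu ks := mulr_gt0 lam_gt0 gap_gt0.
have e : lam * gap mu ks * (a / s.+1%:R) = KL * (c0 / s.+1%:R).
  by rewrite /c0 /a /Dmu mu_ks1 -/KL; field; rewrite !gt_eqF.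
rewrite -mulrBr -(ler_pM2l lg_gt0) e mulrCA; apply: ler_wpM2l; first exact: ltW.
exact: le_trans (queue_regret_ge_subopt_increment s) (ltW hreg).
Qed.

End QueueBandit.

Theorem theorem1 (R : realType) (K : nat) (lam : R) (mu : 'I_K -> R)
    (ks : 'I_K) (pi : nat -> R) (alpha : R) (pol : policy R K) :
  (2 <= K)%N ->
  instance lam mu ks ->
  stationary_dist lam (mu ks) pi ->
  0 < alpha < 1 ->
  valid_policy pol ->
  alpha_consistent alpha pol ->
  forall N : nat, exists t : nat, (N < t)%N /\
    queue_regret lam mu ks pol pi t >=
      (lam / 4 * Dmu mu ks * (1 - alpha) * (K%:R - 1)) / t%:R.
Proof.
move=> hK hinst [pi_ge0 [pi1 _]] ha hpol hcons N.
have [/andP[lam_ge0 _] _] := hinst.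
have [[lam_gt0 D_gt0]|c0_le0] : (0 < lam /\ 0 < Dmu mu ks) \/
    lam / 4 * Dmu mu ks * (1 - alpha) * (K%:R - 1) <= 0.
  have [D_gt0|D_le0] := ltrP 0 (Dmu mu ks); last first.
    right; apply: mulr_le0_ge0; last by rewrite subr_ge0 ler1n ltnW.
    apply: mulr_le0_ge0; last by case/andP: ha => _ a1; rewrite subr_ge0 ltW.
    by apply: mulr_ge0_le0; rewrite ?divr_ge0.
  have [lam0|lam_neq0] := eqVneq lam 0; first by right; rewrite lam0 !mul0r.
  by left; rewrite lt0r lam_neq0.
- exact: queue_regret_infinitely_often_ge.
- exists N.+1; split => //; apply: le_trans (queue_regret_ge0 hinst hpol pi_ge0 pi1 N).
  by apply: mulr_le0_ge0; rewrite ?invr_ge0.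
Qed.
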